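(* Let $G$ be a countable linear sofic group. Then there exist a non-principal ultrafilter $\omega'$ on $\mathbb{N}$, a sequence $m_k\to\infty$ and a group morphism $\Psi:G\to\prod_{k\to\omega'}GL_{m_k}(\mathbb{C})/d_{\omega'}$ such that $d_{\omega'}(\Psi(g),\mathrm{Id})\geqslant\frac14$ for every $g\in G\setminus\{e\}$.
   Context: For $a\in M_n(\mathbb{C})$, $\rho(a)=\operatorname{rk}(a)/n$. For a non-principal ultrafilter $\omega$ on $\mathbb{N}$ and $n_k\to\infty$, $\prod_{k\to\omega}GL_{n_k}(\mathbb{C})/d_\omega$ is the quotient of $\prod_kGL_{n_k}(\mathbb{C})$ by $\{(a_k)_k:\lim_{k\to\omega}\rho(a_k-\mathrm{Id})=0\}$, with metric $d_\omega((a_k),(b_k))=\lim_{k\to\omega}\rho(a_k-b_k)$. A countable group is linear sofic if it admits an injective group morphism into some $\prod_{k\to\omega}GL_{n_k}(\mathbb{C})/d_\omega$. *)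

From HB Require Import structures.
From Stdlib Require Import Reals Lra Psatz.
From Stdlib Require Import Classical ClassicalEpsilon FunctionalExtensionality.
From mathcomp Require Import all_boot all_order all_algebra.
Set Implicit Arguments. Unset Strict Implicit. Unset Printing Implicit Defensive.

Record complex := mkC { Rep : R; Imp : R }.
Definition C := complex.

Definition C_eqb (x y : C) : bool :=
  if excluded_middle_informative (x = y) then true else false.
Lemma C_eqP : Equality.axiom C_eqb.
Proof. move=> x y; rewrite /C_eqb; case: excluded_middle_informative => h; by constructor. Qed.
HB.instance Definition _ := hasDecEq.Build C C_eqP.

Definition C_find (P : pred C) (n : nat) : option C :=
  match excluded_middle_informative (exists x, P x) with
  | left h => Some (proj1_sig (constructive_indefinite_description _ h))
  | right _ => None
  end.
Lemma C_find_correct P n x : C_find P n = Some x -> P x.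
Proof.
rewrite /C_find; case: excluded_middle_informative => // h [<-].
exact: proj2_sig (constructive_indefinite_description _ h).
Qed.
Lemma C_find_complete (P : pred C) : (exists x, P x) -> exists n, C_find P n.
Proof. move=> h; exists 0%N; rewrite /C_find; case: excluded_middle_informative => //. Qed.
Lemma C_find_ext (P Q : pred C) : P =1 Q -> C_find P =1 C_find Q.
Proof. move=> /functional_extensionality -> //. Qed.
HB.instance Definition _ := hasChoice.Build C C_find_correct C_find_complete C_find_ext.

Local Open Scope R_scope.
Definition C0 : C := mkC 0 0.
Definition C1 : C := mkC 1 0.
Definition Copp (x : C) : C := mkC (- Rep x) (- Imp x).
Definition Cadd (x y : C) : C := mkC (Rep x + Rep y) (Imp x + Imp y).
Definition Cmul (x y : C) : C :=
  mkC (Rep x * Rep y - Imp x * Imp y) (Rep x * Imp y + Imp x * Rep y).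
Definition Cinv (x : C) : C :=
  mkC (Rep x / (Rep x * Rep x + Imp x * Imp x))
      (- Imp x / (Rep x * Rep x + Imp x * Imp x)).

Lemma Cadd_assoc : associative Cadd.
Proof. move=> [a b] [c d] [e f]; rewrite /Cadd /=; f_equal; ring. Qed.
Lemma Cadd_comm : commutative Cadd.
Proof. move=> [a b] [c d]; rewrite /Cadd /=; f_equal; ring. Qed.
Lemma Cadd0 : left_id C0 Cadd.
Proof. move=> [a b]; rewrite /Cadd /=; f_equal; ring. Qed.
Lemma CaddN : left_inverse C0 Copp Cadd.
Proof. move=> [a b]; rewrite /Cadd /C0 /=; f_equal; ring. Qed.
HB.instance Definition _ := GRing.isZmodule.Build C Cadd_assoc Cadd_comm Cadd0 CaddN.

Lemma Cmul_assoc : associative Cmul.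
Proof. move=> [a b] [c d] [e f]; rewrite /Cmul /=; f_equal; ring. Qed.
Lemma Cmul_comm : commutative Cmul.
Proof. move=> [a b] [c d]; rewrite /Cmul /=; f_equal; ring. Qed.
Lemma Cmul1 : left_id C1 Cmul.
Proof. move=> [a b]; rewrite /Cmul /=; f_equal; ring. Qed.
Lemma CmulDl : left_distributive Cmul Cadd.
Proof. move=> [a b] [c d] [e f]; rewrite /Cmul /Cadd /=; f_equal; ring. Qed.
Lemma C1_neq0 : C1 != C0.
Proof. apply/eqP => -[h]; lra. Qed.
HB.instance Definition _ :=
  GRing.Zmodule_isComNzRing.Build C Cmul_assoc Cmul_comm Cmul1 CmulDl C1_neq0.

Lemma CmulVf (x : C) : x != 0%R -> (Cinv x * x)%R = 1%R.
Proof.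
case: x => a b /eqP hx.
have hn : a * a + b * b <> 0.
  move=> h; apply: hx.
  have ha : a = 0 by nra.
  have hb : b = 0 by nra.
  by rewrite ha hb.
change (Cmul (Cinv (mkC a b)) (mkC a b) = C1).
rewrite /Cmul /Cinv /C1 /=; f_equal; field; exact: hn.
Qed.
Lemma Cinv0 : Cinv 0%R = 0%R.
Proof.
change (Cinv C0 = C0); rewrite /Cinv /C0 /=; f_equal; rewrite /Rdiv;
  replace (0 * 0 + 0 * 0) with 0 by ring; rewrite Rinv_0; ring.
Qed.
HB.instance Definition _ := GRing.ComNzRing_isField.Build C CmulVf Cinv0.
Close Scope R_scope.

Record countable_group := CountableGroup {
  gcar :> Type;
  gmul : gcar -> gcar -> gcar;
  ginv : gcar -> gcar;
  gone : gcar;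
  gmulA : forall x y z, gmul x (gmul y z) = gmul (gmul x y) z;
  gmul1 : forall x, gmul gone x = x;
  gmulV : forall x, gmul (ginv x) x = gone;
  gcountable : exists f : gcar -> nat, injective f
}.

Record ultrafilter := Ultrafilter {
  uf_mem : (nat -> Prop) -> Prop;
  uf_full : uf_mem (fun _ => True);
  uf_proper : ~ uf_mem (fun _ => False);
  uf_inter : forall A B, uf_mem A -> uf_mem B -> uf_mem (fun k => A k /\ B k);
  uf_upward : forall A B : nat -> Prop, (forall k, A k -> B k) -> uf_mem A -> uf_mem B;
  uf_ultra : forall A : nat -> Prop, uf_mem A \/ uf_mem (fun k => ~ A k)
}.

Definition nonprincipal (U : ultrafilter) : Prop :=
  forall m : nat, ~ uf_mem U (fun k => k = m).

Local Open Scope R_scope.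
Definition is_ulim (U : ultrafilter) (x : nat -> R) (L : R) : Prop :=
  forall eps : R, 0 < eps -> uf_mem U (fun k => Rabs (x k - L) < eps).
Close Scope R_scope.

Definition diverges (n : nat -> nat) : Prop :=
  forall N : nat, exists K : nat, forall k : nat, (K <= k)%N -> (N <= n k)%N.

Local Open Scope ring_scope.

Definition rho (n : nat) (a : 'M[C]_n) : R := Rdiv (INR (\rank a)) (INR n).

(* elements of prod_k GL_{n_k}(C): sequences of invertible matrices *)
Definition mxseq (n : nat -> nat) := forall k : nat, 'M[C]_(n k).
Definition is_GLseq (n : nat -> nat) (a : mxseq n) : Prop :=
  forall k, a k \in unitmx.
Definition mxseq_one (n : nat -> nat) : mxseq n := fun k => 1%:M.
Definition mxseq_mul (n : nat -> nat) (a b : mxseq n) : mxseq n :=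
  fun k => a k *m b k.

Definition d_omega_is (U : ultrafilter) (n : nat -> nat) (a b : mxseq n) (L : R) : Prop :=
  is_ulim U (fun k => rho (a k - b k)) L.

(* A group morphism G -> prod_{k->U} GL_{n_k}(C)/d_U, given through a lift
   Phi : G -> prod_k GL_{n_k}(C); Phi(gh) and Phi(g)Phi(h) must have the
   same class in the quotient, i.e. be at d_U-distance 0. *)
Definition ultraprod_morphism (G : countable_group) (U : ultrafilter)
    (n : nat -> nat) (Phi : G -> mxseq n) : Prop :=
  (forall g, is_GLseq (Phi g)) /\
  (forall g h, d_omega_is U (Phi (gmul g h)) (mxseq_mul (Phi g) (Phi h)) R0).

Definition ultraprod_injective (G : countable_group) (U : ultrafilter)
    (n : nat -> nat) (Phi : G -> mxseq n) : Prop :=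
  forall g h, d_omega_is U (Phi g) (Phi h) R0 -> g = h.

Definition linear_sofic (G : countable_group) : Prop :=
  exists (U : ultrafilter) (n : nat -> nat) (Phi : G -> mxseq n),
    [/\ nonprincipal U, diverges n, ultraprod_morphism U Phi
      & ultraprod_injective U Phi].

From Pilot Require Import Defs.
From HB Require Import structures.
From Stdlib Require Import Reals.
From mathcomp Require Import all_boot all_order all_algebra.
From Stdlib Require Import Lra Psatz Classical Cantor.
From mathcomp Require Import mxtens zify.
Import Defs.
Set Implicit Arguments. Unset Strict Implicit. Unset Printing Implicit Defensive.
Import GRing.Theory.

(* Write d(a, b) = rk(a - b) / n for the normalized rank distance on M_n(C).
   The proof rests on the amplification map

       T(a) = a (x) diag(a, 1)     in M_{n(2n)}(C)     (Kronecker product),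

   which is multiplicative, preserves invertibility, is 3/2-Lipschitz for d,
   and pushes invertible matrices away from the identity:
       d(T a, 1) >= min(9/8 d(a, 1), 1/4).
   Iterating, d(T^t a, T^t b) <= (3/2)^t d(a, b), while
   d(T^t a, 1) >= 1/4 as soon as (9/8)^t d(a, 1) >= 1/4.

   Starting from a linear sofic embedding g |-> (Phi_k(g))_k along U (with all
   dimensions n_k >= 1, which costs a harmless reindexing), the new
   approximation is Psi_(k,t)(g) = T^t(Phi_k(g)), indexed by pairs (k, t)
   coded through Cantor pairing, along the product ultrafilter U (x) U,
   "for U-most t, for U-most k".  For each fixed t the morphism defect
   vanishes along k; for g <> e the distance d(Phi_k(g), 1) stays above some
   eps > 0 on a U-large set, so d(Psi_(k,t)(g), 1) >= 1/4 for all large t. *)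

Section KroneckerRank.
Variable F : fieldType.
Local Open Scope ring_scope.

Lemma tens1mx1 m n : (1%:M : 'M[F]_m) *t (1%:M : 'M[F]_n) = 1%:M.
Proof.
apply/matrixP=> i j.
case: (mxtens_indexP i)=> i0 i1; case: (mxtens_indexP j)=> j0 j1.
rewrite tensmxE !mxE -natrM mulnb; congr (_%:R); congr nat_of_bool.
apply/idP/idP; first by case/andP=> /eqP-> /eqP->.
by move/eqP/(can_inj (@mxtens_indexK _ _))=> [-> ->]; rewrite !eqxx.
Qed.

Lemma tensmxBl m n p q (A B : 'M[F]_(m, n)) (C : 'M[F]_(p, q)) :
  (A - B) *t C = A *t C - B *t C.
Proof. by apply/matrixP=> i j; rewrite !mxE mulrBl. Qed.

Lemma tensmxBr m n p q (A : 'M[F]_(m, n)) (B C : 'M[F]_(p, q)) :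
  A *t (B - C) = A *t B - A *t C.
Proof. by apply/matrixP=> i j; rewrite !mxE mulrBr. Qed.

(* rk(A (x) B) >= rk A * rk B: sandwiching A (x) B between Kronecker products
   of left/right inverses of the base factors of A and B yields an identity. *)
Lemma rank_tensmx_ge m n p q (A : 'M[F]_(m, n)) (B : 'M[F]_(p, q)) :
  (\rank A * \rank B <= \rank (A *t B))%N.
Proof.
have base_inv k l (X : 'M[F]_(k, l)) :
    exists L D, L *m X *m D = (1%:M : 'M[F]_(\rank X)).
  have [L HL] := row_fullP (col_base_full X).
  have [D HD] := row_freeP (row_base_free X).
  exists L, D; have -> : L *m X = L *m (col_base X *m row_base X) by rewrite mulmx_base.
  by rewrite mulmxA HL mul1mx HD.
have [L [D HA]] := base_inv _ _ A; have [L' [D' HB]] := base_inv _ _ B.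
have E : (L *t L') *m (A *t B) *m (D *t D') = 1%:M.
  by rewrite !tensmx_mul HA HB tens1mx1.
have := mxrank1 F (\rank A * \rank B); rewrite -E => <-.
exact: leq_trans (mxrankM_maxl _ _) (mxrankM_maxr _ _).
Qed.

Lemma rank_tensmx_le_left m n p q (A : 'M[F]_(m, n)) (B : 'M[F]_(p, q)) :
  (\rank (A *t B) <= \rank A * p)%N.
Proof.
have -> : A *t B = (col_base A *t 1%:M) *m (row_base A *t B).
  by rewrite tensmx_mul mul1mx mulmx_base.
exact: leq_trans (mxrankM_maxr _ _) (rank_leq_row _).
Qed.

Lemma rank_tensmx_le_right m n p q (A : 'M[F]_(m, n)) (B : 'M[F]_(p, q)) :
  (\rank (A *t B) <= m * \rank B)%N.
Proof.
have -> : A *t B = (1%:M *t col_base B) *m (A *t row_base B).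
  by rewrite tensmx_mul mul1mx mulmx_base.
exact: leq_trans (mxrankM_maxr _ _) (rank_leq_row _).
Qed.

Lemma kermx_sub1_fixed n (x : 'M[F]_n) : kermx (x - 1%:M) *m x = kermx (x - 1%:M).
Proof.
by apply/eqP; rewrite -subr_eq0 -{2}[kermx _]mulmx1 -mulmxBr mulmx_ker.
Qed.

End KroneckerRank.

Section Amplification.
Variables (F : fieldType) (n : nat).
Local Open Scope ring_scope.

Definition ampl_block (a : 'M[F]_n) : 'M[F]_(n + n) := block_mx a 0 0 1%:M.

Definition amplify (a : 'M[F]_n) : 'M[F]_(n * (n + n)) := a *t ampl_block a.

Lemma ampl_blockM (a b : 'M[F]_n) :
  ampl_block (a *m b) = ampl_block a *m ampl_block b.
Proof. by rewrite /ampl_block mulmx_block !mulmx0 !mul0mx !addr0 !add0r mulmx1. Qed.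

Lemma ampl_block1 : ampl_block 1%:M = 1%:M.
Proof. by rewrite /ampl_block -scalar_mx_block. Qed.

Lemma ampl_blockB (a b : 'M[F]_n) :
  ampl_block a - ampl_block b = block_mx (a - b) 0 0 0.
Proof. by rewrite /ampl_block opp_block_mx add_block_mx !oppr0 !addr0 subrr. Qed.

Lemma rank_ampl_blockB (a b : 'M[F]_n) :
  \rank (ampl_block a - ampl_block b) = \rank (a - b).
Proof. by rewrite ampl_blockB rank_diag_block_mx mxrank0 addn0. Qed.

Lemma amplifyM (a b : 'M[F]_n) : amplify (a *m b) = amplify a *m amplify b.
Proof. by rewrite /amplify tensmx_mul ampl_blockM. Qed.

Lemma amplify_unit (a : 'M[F]_n) : a \in unitmx -> amplify a \in unitmx.
Proof.
rewrite /amplify /ampl_block; case: n a => [|k] a ua.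
  by rewrite unitmxE det_mx00 unitr1.
by apply: tensmx_unit => //; rewrite block_diag_mx_unit ua unitmx1.
Qed.

(* Lipschitz estimate: T a - T b = (a - b) (x) diag(a, 1) + b (x) diag(a - b, 0),
   so rk(T a - T b) <= rk(a - b) * 2n + n * rk(a - b). *)
Lemma rank_amplifyB_le (a b : 'M[F]_n) :
  (\rank (amplify a - amplify b)%R <= \rank (a - b)%R * (n + n) + n * \rank (a - b)%R)%N.
Proof.
have -> : amplify a - amplify b
    = (a - b) *t ampl_block a + b *t (ampl_block a - ampl_block b).
  by rewrite /amplify tensmxBl tensmxBr addrA subrK.
apply: leq_trans (mxrank_add _ _) _; apply: leq_add; first exact: rank_tensmx_le_left.
by rewrite -(rank_ampl_blockB a b); exact: rank_tensmx_le_right.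
Qed.

End Amplification.

(* With b = diag(a, 1) and c = b^-1, the matrix T a - 1 = a (x) b - 1 has the
   same rank as a (x) 1 - 1 (x) c.  Multiplying the latter on the left by
   1 (x) ker(c - 1) and by ker(a - 1) (x) 1 isolates the blocks
   P = (a - 1) (x) ker(c - 1) and Q = ker(a - 1) (x) (1 - c), and killing Q by a
   right factor 1 (x) Z with (1 - c) Z = 0 splits their ranks. *)
Section AmplifyLowerBound.
Variables (F : fieldType) (n : nat) (a : 'M[F]_n).
Hypothesis a_unit : a \in unitmx.
Local Open Scope ring_scope.

Let b := ampl_block a.
Let c := ampl_block (invmx a).
Let r := \rank (a - 1%:M).

Lemma ampl_block_mulV : b *m c = 1%:M.
Proof. by rewrite /b /c -ampl_blockM mulmxV // ampl_block1. Qed.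

Lemma ampl_block_mulVr : c *m b = 1%:M.
Proof. by rewrite /b /c -ampl_blockM mulVmx // ampl_block1. Qed.

Lemma one_sub_ampl_inv : 1%:M - c = c *m (b - 1%:M).
Proof. by rewrite mulmxBr ampl_block_mulVr mulmx1. Qed.

Lemma rank_one_sub_ampl_inv : \rank (1%:M - c) = r.
Proof.
have rank_b1 : \rank (b - 1%:M) = r by rewrite /b -ampl_block1 rank_ampl_blockB.
apply/eqP; rewrite eqn_leq one_sub_ampl_inv -rank_b1 mxrankM_maxr /=.
have {1}-> : b - 1%:M = b *m (c *m (b - 1%:M)).
  by rewrite mulmxA ampl_block_mulV mul1mx.
exact: mxrankM_maxr.
Qed.

Let Kc := kermx (c - 1%:M).
Let Ka := kermx (a - 1%:M).
Let Mac : 'M[F]_(n * (n + n)) := a *t 1%:M - 1%:M *t c.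
Let P := (a - 1%:M) *t Kc.
Let Q := Ka *t (1%:M - c).

Lemma rank_Mac_le : (\rank Mac <= \rank (amplify a - 1%:M)%R)%N.
Proof.
have -> : Mac = (amplify a - 1%:M) *m (1%:M *t c).
  by rewrite mulmxBl mul1mx /amplify tensmx_mul mulmx1 -/b ampl_block_mulV.
exact: mxrankM_maxl.
Qed.

Lemma rank_PQ_le : (\rank (col_mx P Q) <= \rank Mac)%N.
Proof.
have -> : col_mx P Q = col_mx (1%:M *t Kc) (Ka *t 1%:M) *m Mac.
  rewrite mul_col_mx /Mac !mulmxBr !tensmx_mul !mul1mx !mulmx1.
  by rewrite kermx_sub1_fixed kermx_sub1_fixed /P /Q tensmxBl tensmxBr.
exact: mxrankM_maxr.
Qed.

Lemma rank_PQ_ge k (Z : 'M[F]_(n + n, k)) : (1%:M - c) *m Z = 0 ->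
  (\rank Q + \rank ((a - 1%:M) *t (Kc *m Z))%R <= \rank (col_mx P Q))%N.
Proof.
move=> cZ; rewrite -(mxrank_mul_ker (col_mx P Q) (1%:M *t Z)) [X in (_ <= X)%N]addnC.
apply: leq_add.
  apply: mxrankS; rewrite sub_capmx; apply/andP; split.
    have {1}-> : Q = row_mx 0 1%:M *m col_mx P Q.
      by rewrite mul_row_col mul0mx add0r mul1mx.
    exact: submxMl.
  by apply/sub_kermxP; rewrite /Q tensmx_mul cZ mulmx1 tensmx0.
have -> : col_mx P Q *m (1%:M *t Z) = col_mx ((a - 1%:M) *t (Kc *m Z)) 0.
  by rewrite mul_col_mx /P /Q !tensmx_mul cZ mulmx1 tensmx0.
by rewrite rank_col_mx0.
Qed.

Lemma rank_Q_ge : ((n - r) * r <= \rank Q)%N.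
Proof.
by have := rank_tensmx_ge Ka (1%:M - c); rewrite /Ka mxrank_ker rank_one_sub_ampl_inv.
Qed.

Lemma rank_amplify_sub1_ge k (Z : 'M[F]_(n + n, k)) : (1%:M - c) *m Z = 0 ->
  ((n - r) * r + r * \rank (Kc *m Z) <= \rank (amplify a - 1%:M)%R)%N.
Proof.
move=> cZ; apply: leq_trans rank_Mac_le; apply: leq_trans rank_PQ_le.
apply: leq_trans (rank_PQ_ge cZ); apply: leq_add; first exact: rank_Q_ge.
exact: rank_tensmx_ge.
Qed.

(* Bound useful for small r: take Z = the cokernel of 1 - c. *)
Lemma rank_amplify_sub1_ge_small :
  ((n - r) * r + r * ((n + n - r) - r) <= \rank (amplify a - 1%:M)%R)%N.
Proof.
apply: leq_trans (rank_amplify_sub1_ge (mulmx_coker (1%:M - c))).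
rewrite leq_add2l leq_mul2l; apply/orP; right.
apply: leq_trans (mxrank_mul_min _ _).
rewrite mxrank_coker rank_one_sub_ampl_inv /Kc mxrank_ker -opprB mxrank_opp.
rewrite rank_one_sub_ampl_inv.
have := rank_leq_row (a - 1%:M); rewrite -/r; lia.
Qed.

(* Bound useful for large r: take Z = diag(0, 1); the rows (0, 1) of
   ker(c - 1) survive and have rank n. *)
Lemma rank_amplify_sub1_ge_large :
  ((n - r) * r + r * n <= \rank (amplify a - 1%:M)%R)%N.
Proof.
pose Z : 'M[F]_(n + n) := block_mx 0 0 0 1%:M.
have cZ : (1%:M - c) *m Z = 0.
  rewrite one_sub_ampl_inv -mulmxA /b -ampl_block1 ampl_blockB /Z mulmx_block.
  by rewrite !mulmx0 !mul0mx !addr0 block_mx0 mulmx0.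
apply: leq_trans (rank_amplify_sub1_ge cZ); rewrite leq_add2l leq_mul2l.
apply/orP; right.
pose E : 'M[F]_(n, n + n) := row_mx 0 1%:M.
have Eb : E *m b = E by rewrite /E /b /ampl_block mul_row_block !mul0mx !mulmx0 !add0r mulmx1.
have Ec : E *m c = E by rewrite -{1}Eb -mulmxA ampl_block_mulV mulmx1.
have EK : (E <= Kc)%MS by apply/sub_kermxP; rewrite mulmxBr Ec mulmx1 subrr.
have EZ : E *m Z = E by rewrite /E /Z mul_row_block !mul0mx !mulmx0 !addr0 add0r mulmx1.
apply: leq_trans (_ : \rank E <= \rank (Kc *m Z))%N.
  have EI : E *m col_mx 0 1%:M = 1%:M :> 'M[F]_n.
    by rewrite mul_row_col mulmx0 add0r mulmx1.
  by have := mxrankM_maxl E (col_mx 0 1%:M : 'M[F]_(n + n, n)); rewrite EI mxrank1.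
by apply: mxrankS; rewrite -{1}EZ; apply: submxMr.
Qed.

End AmplifyLowerBound.

Definition mx_dist n (a b : 'M[C]_n) : R := rho (a - b)%R.

Section Distance.
Local Open Scope R_scope.

Lemma Rdiv_INR0 x : x / INR 0 = 0.
Proof. by rewrite /Rdiv /= Rinv_0 Rmult_0_r. Qed.

Lemma mx_dist_ge0 n (a b : 'M[C]_n) : 0 <= mx_dist a b.
Proof.
rewrite /mx_dist /rho; case: n a b => [|n] a b; first by rewrite Rdiv_INR0; lra.
apply: Rmult_le_pos; first exact: pos_INR.
by apply: Rlt_le; apply: Rinv_0_lt_compat; apply: lt_0_INR; lia.
Qed.

Lemma mx_dist_le1 n (a b : 'M[C]_n) : mx_dist a b <= 1.
Proof.
rewrite /mx_dist /rho; case: n a b => [|n] a b; first by rewrite Rdiv_INR0; lra.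
have hn : 0 < INR n.+1 by apply: lt_0_INR; lia.
move: (rank_leq_row (a - b)%R) => /leP /le_INR h.
apply: (Rmult_le_reg_r (INR n.+1)) => //.
rewrite /Rdiv Rmult_assoc Rinv_l; lra.
Qed.

Lemma mx_dist_triangle n (a b c : 'M[C]_n) :
  mx_dist a c <= mx_dist a b + mx_dist b c.
Proof.
rewrite /mx_dist /rho; case: n a b c => [|n] a b c; first by rewrite !Rdiv_INR0; lra.
have -> : (a - c = (a - b) + (b - c))%R by rewrite addrA subrK.
rewrite /Rdiv -Rmult_plus_distr_r -plus_INR.
apply: Rmult_le_compat_r.
  by apply: Rlt_le; apply: Rinv_0_lt_compat; apply: lt_0_INR; lia.
apply: le_INR; apply/leP.
exact: mxrank_add.
Qed.

Lemma mx_dist_sym n (a b : 'M[C]_n) : mx_dist a b = mx_dist b a.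
Proof. by rewrite /mx_dist /rho -opprB mxrank_opp. Qed.

Lemma mx_dist_sqr n (x : 'M[C]_n) : x \in unitmx -> mx_dist x (mulmx x x) = mx_dist x 1%:M.
Proof.
move=> ux; rewrite mx_dist_sym /mx_dist /rho.
have -> : (mulmx x x - x = (x - 1%:M) *m x)%R by rewrite mulmxBl mul1mx.
by rewrite mxrankMfree ?row_free_unit.
Qed.

Lemma mx_dist_amplify_le n (a b : 'M[C]_n) :
  mx_dist (amplify a) (amplify b) <= 3 / 2 * mx_dist a b.
Proof.
rewrite /mx_dist /rho; case: n a b => [|n] a b; first by rewrite !Rdiv_INR0; lra.
move: (rank_amplifyB_le a b).
set r := \rank (a - b)%R; set r' := \rank _ => hr.
have {hr} : (r' <= 3 * r * n.+1)%N by lia.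
move/leP/le_INR; rewrite !mult_INR => hr.
have hn : 0 < INR n.+1 by apply: lt_0_INR; lia.
have -> : INR (n.+1 + n.+1) = 2 * INR n.+1 by rewrite plus_INR; ring.
apply: (Rmult_le_reg_r (INR n.+1 * (2 * INR n.+1))); first nra.
rewrite /Rdiv Rmult_assoc Rinv_l; last nra.
have -> : 3 / 2 * (INR r * / INR n.+1) * (INR n.+1 * (2 * INR n.+1))
   = 3 * INR r * INR n.+1 by field; lra.
by move: hr; simpl (INR 3); lra.
Qed.

(* The real inequality behind the gain 9/8: with x = d(a, 1) and y = d(T a, 1),
   the two rank bounds read x(3 - 3x)/2 <= y and x(2 - x)/2 <= y. *)
Lemma amplification_gain (x y : R) : 0 <= x <= 1 ->
  x * (3 - 3 * x) / 2 <= y -> x * (2 - x) / 2 <= y -> Rmin (9 / 8 * x) (1 / 4) <= y.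
Proof.
move=> hx h1 h2.
case: (Rle_lt_dec x (1 / 4)) => hc; first by apply: Rle_trans (Rmin_l _ _) _; nra.
apply: Rle_trans (Rmin_r _ _) _.
by case: (Rle_lt_dec x (1 / 2)) => hc2; nra.
Qed.

Lemma mx_dist_amplify_one_ge n (a : 'M[C]_n) : a \in unitmx ->
  Rmin (9 / 8 * mx_dist a 1%:M) (1 / 4) <= mx_dist (amplify a) 1%:M.
Proof.
move=> ua; case: n a ua => [|n] a ua.
  apply: Rle_trans (Rmin_l _ _) _.
  have -> : mx_dist a 1%:M = 0 by rewrite /mx_dist /rho Rdiv_INR0.
  by rewrite Rmult_0_r; exact: mx_dist_ge0.
have h1 := rank_amplify_sub1_ge_small ua; have h2 := rank_amplify_sub1_ge_large ua.
have hr := rank_leq_row (a - 1%:M)%R.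
have hx := mx_dist_le1 a 1%:M; have hx0 := mx_dist_ge0 a 1%:M.
rewrite /mx_dist /rho in hx hx0 *.
move: h1 h2 hr hx hx0.
set N := n.+1; set r := \rank (a - 1%:M)%R; set r' := \rank _ => h1 h2 hr hx hx0.
have hN : 0 < INR N by apply: lt_0_INR; lia.
have -> : INR (N * (N + N)) = 2 * INR N * INR N by rewrite mult_INR plus_INR; ring.
move/leP/le_INR: h1; move/leP/le_INR: h2.
rewrite !plus_INR !mult_INR !minus_INR ?plus_INR; try (apply/leP; lia).
set x := INR r / INR N => h2 h1.
have rx : INR r = x * INR N by rewrite /x; field; lra.
rewrite rx in h1 h2.
have cancel_den : INR r' / (2 * INR N * INR N) * (2 * INR N * INR N) = INR r'.
  by field; lra.
apply: amplification_gain; first by split.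
- by apply: (Rmult_le_reg_r (2 * INR N * INR N)); [nra | rewrite cancel_den; nra].
- by apply: (Rmult_le_reg_r (2 * INR N * INR N)); [nra | rewrite cancel_den; nra].
Qed.

End Distance.

Fixpoint ampl_dim (t n : nat) : nat :=
  match t with 0 => n | t'.+1 => (ampl_dim t' n * (ampl_dim t' n + ampl_dim t' n))%N end.

Fixpoint amplify_iter (F : fieldType) (n : nat) (a : 'M[F]_n) (t : nat) {struct t}
    : 'M[F]_(ampl_dim t n) :=
  match t as t0 return 'M[F]_(ampl_dim t0 n) with
  | 0 => a
  | t'.+1 => amplify (amplify_iter a t')
  end.

Section IteratedAmplification.

Lemma amplify_iterM (F : fieldType) n (a b : 'M[F]_n) t :
  amplify_iter (mulmx a b) t = mulmx (amplify_iter a t) (amplify_iter b t).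
Proof. by elim: t => [|t IH] //=; rewrite IH amplifyM. Qed.

Lemma amplify_iter_unit (F : fieldType) n (a : 'M[F]_n) t :
  a \in unitmx -> amplify_iter a t \in unitmx.
Proof. by move=> ua; elim: t => [|t IH] //=; apply: amplify_unit. Qed.

Lemma ampl_dim_ge n t : (1 <= n)%N -> (n <= ampl_dim t n)%N /\ (2 ^ t <= ampl_dim t n)%N.
Proof.
move=> hn; elim: t => [|t [IH1 IH2]] /=; first by rewrite expn0.
by rewrite expnS; split; nia.
Qed.

Local Open Scope R_scope.

Lemma mx_dist_amplify_iter_le n (a b : 'M[C]_n) t :
  mx_dist (amplify_iter a t) (amplify_iter b t) <= (3 / 2) ^ t * mx_dist a b.
Proof.
elim: t => [|t IH] /=; first lra.
apply: Rle_trans (mx_dist_amplify_le _ _) _.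
by have := mx_dist_ge0 (amplify_iter a t) (amplify_iter b t); nra.
Qed.

Lemma mx_dist_amplify_iter_one_ge n (a : 'M[C]_n) t : a \in unitmx ->
  Rmin ((9 / 8) ^ t * mx_dist a 1%:M) (1 / 4) <= mx_dist (amplify_iter a t) 1%:M.
Proof.
move=> ua; elim: t => [|t IH] /=; first by rewrite Rmult_1_l; apply: Rmin_l.
apply: Rle_trans (mx_dist_amplify_one_ge (amplify_iter_unit t ua)).
have hv : 0 <= (9 / 8) ^ t * mx_dist a 1%:M.
  by apply: Rmult_le_pos; [apply: pow_le; lra | exact: mx_dist_ge0].
move: IH hv; rewrite Rmult_assoc.
set u := mx_dist _ _; set v := _ * mx_dist a 1%:M.
by rewrite /Rmin; repeat destruct Rle_dec; lra.
Qed.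

(* (9/8)^t eventually exceeds any bound: Bernoulli's inequality suffices. *)
Lemma pow_9_8_large eps : 0 < eps ->
  exists t0, forall t, (t0 <= t)%N -> 1 / 4 <= (9 / 8) ^ t * eps.
Proof.
move=> he; have [N hN] := INR_archimed (eps / 8) (1 / 4) ltac:(lra).
exists N => t ht.
have bernoulli : 1 + INR t / 8 <= (9 / 8) ^ t.
  elim: (t) => [|s IH]; first by rewrite /=; lra.
  by rewrite S_INR /=; have := pos_INR s; nra.
have : INR N <= INR t by apply: le_INR; apply/leP.
by have := pos_INR N; nra.
Qed.

End IteratedAmplification.

Section Ultralimits.
Variable U : ultrafilter.
Local Open Scope R_scope.

Lemma uf_cofinite : nonprincipal U -> forall N, uf_mem U (fun k => (N <= k)%N).
Proof.
move=> np; elim=> [|N IH]; first exact: uf_upward (@uf_full U).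
have : uf_mem U (fun k => k <> N) by case: (@uf_ultra U (fun k => k = N)) => // /np.
move=> /(uf_inter IH); apply: uf_upward => k [h1 h2].
by rewrite ltn_neqAle h1 andbT; apply/eqP=> e; apply: h2; rewrite e.
Qed.

Lemma is_ulim_eventually_eq (x y : nat -> R) L :
  uf_mem U (fun k => x k = y k) -> is_ulim U x L -> is_ulim U y L.
Proof.
move=> hxy hx eps heps.
by apply: uf_upward (uf_inter hxy (hx eps heps)) => k [<-].
Qed.

(* Bounded sequences have an ultralimit (the supremum of the lower bounds
   holding U-almost everywhere), which dominates every such lower bound. *)
Lemma ulim_exists (x : nat -> R) : (forall k, 0 <= x k <= 1) ->
  exists L, is_ulim U x L /\ (forall c, uf_mem U (fun k => c <= x k) -> c <= L).
Proof.
move=> hx.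
pose E y := uf_mem U (fun k => y <= x k).
have hb : bound E.
  exists 1 => y hy; apply: Rnot_lt_le => hlt.
  by apply: (@uf_proper U); apply: uf_upward hy => k; have := hx k; lra.
have he : exists y, E y by exists 0; apply: uf_upward (@uf_full U) => k _; case: (hx k).
have [L [hub hlub]] := completeness E hb he.
exists L; split; last by move=> c hc; apply: hub.
move=> eps heps.
have below : uf_mem U (fun k => x k < L + eps / 2).
  case: (@uf_ultra U (fun k => x k < L + eps / 2)) => // h.
  have : E (L + eps / 2) by apply: uf_upward h => k /Rnot_lt_le.
  by move/hub; lra.
have [y [hy hyL]] : exists y, E y /\ L - eps / 2 < y.
  apply: NNPP => hn.
  have : L <= L - eps / 2.
    by apply: hlub => y hy; apply: Rnot_lt_le => hlt; apply: hn; exists y.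
  lra.
by apply: uf_upward (uf_inter below hy) => k [hk1 hk2]; apply: Rabs_def1; lra.
Qed.

Lemma not_ulim0_bounded_below (x : nat -> R) : (forall k, 0 <= x k) ->
  ~ is_ulim U x 0 -> exists eps, 0 < eps /\ uf_mem U (fun k => eps <= x k).
Proof.
move=> hx hn; apply: NNPP => hne; apply: hn => eps heps.
case: (@uf_ultra U (fun k => Rabs (x k - 0) < eps)) => // h.
exfalso; apply: hne; exists eps; split => //.
apply: uf_upward h => k hk; apply: Rnot_lt_le => hlt; apply: hk.
by rewrite Rminus_0_r Rabs_right; [lra | apply: Rle_ge].
Qed.

End Ultralimits.

(* The product ultrafilter U (x) U on nat, transported along Cantor pairing:
   A is large iff for U-most t, for U-most k, (k, t) is in A. *)
Section ProductUltrafilter.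
Variable U : ultrafilter.

Definition prod_mem (A : nat -> Prop) : Prop :=
  uf_mem U (fun t => uf_mem U (fun k => A (to_nat (k, t)))).

Lemma prod_mem_full : prod_mem (fun _ => True).
Proof. by apply: uf_upward (@uf_full U) => t _; apply: uf_upward (@uf_full U). Qed.

Lemma prod_mem_proper : ~ prod_mem (fun _ => False).
Proof. by move=> h; apply: (@uf_proper U); apply: uf_upward h => t /(@uf_proper U). Qed.

Lemma prod_mem_inter A B : prod_mem A -> prod_mem B -> prod_mem (fun k => A k /\ B k).
Proof.
move=> hA hB; apply: uf_upward (uf_inter hA hB) => t [h1 h2].
exact: uf_inter h1 h2.
Qed.

Lemma prod_mem_upward (A B : nat -> Prop) :
  (forall k, A k -> B k) -> prod_mem A -> prod_mem B.
Proof. by move=> hAB; apply: uf_upward => t; apply: uf_upward => k; apply: hAB. Qed.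

Lemma prod_mem_ultra (A : nat -> Prop) : prod_mem A \/ prod_mem (fun k => ~ A k).
Proof.
case: (@uf_ultra U (fun t => uf_mem U (fun k => A (to_nat (k, t))))) => h; first by left.
right; apply: uf_upward h => t ht.
by case: (@uf_ultra U (fun k => A (to_nat (k, t)))).
Qed.

Definition prodU : ultrafilter :=
  Ultrafilter prod_mem_full prod_mem_proper prod_mem_inter prod_mem_upward prod_mem_ultra.

Lemma prodU_nonprincipal : nonprincipal U -> nonprincipal prodU.
Proof.
move=> np m h; have {h} : prod_mem (fun j => j = m) := h.
move=> h; apply: (@uf_proper U); apply: uf_upward h => t ht.
by apply: (np (of_nat m).1); apply: uf_upward ht => k <-; rewrite cancel_of_to.
Qed.

Lemma prodU_mem (P : nat * nat -> Prop) :
  uf_mem U (fun t => uf_mem U (fun k => P (k, t))) ->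
  uf_mem prodU (fun j => P (of_nat j)).
Proof.
by move=> h; apply: uf_upward h => t; apply: uf_upward => k; rewrite cancel_of_to.
Qed.

End ProductUltrafilter.

Section SoficApproximations.
Variable G : countable_group.
Local Open Scope R_scope.

(* Reindexing by k |-> max k K makes all dimensions positive without changing
   anything U-almost everywhere. *)
Lemma linear_sofic_pos_dims : linear_sofic G ->
  exists (U : ultrafilter) (n : nat -> nat) (Phi : G -> mxseq n),
    [/\ nonprincipal U, forall k, (0 < n k)%N, diverges n,
        ultraprod_morphism U Phi & ultraprod_injective U Phi].
Proof.
move=> [U [n [Phi [np dn [hGL hmor] hinj]]]].
have [K hK] := dn 1%N.
have shift x L : is_ulim U (fun k => x (maxn k K)) L <-> is_ulim U x L.
  have ev : uf_mem U (fun k => x (maxn k K) = x k).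
    by apply: uf_upward (uf_cofinite np K) => k /maxn_idPl ->.
  split; apply: is_ulim_eventually_eq => //.
  by apply: uf_upward ev => k ->.
exists U, (fun k => n (maxn k K)), (fun g k => Phi g (maxn k K)); split => //.
- by move=> k; apply: hK; rewrite leq_maxr.
- move=> N; have [K1 hK1] := dn N.
  by exists K1 => k hk; apply: hK1; rewrite (leq_trans hk) ?leq_maxl.
- split=> [g k|g h]; first exact: hGL.
  exact: (proj2 (shift (fun k => rho (Phi (gmul g h) k - mxseq_mul (Phi g) (Phi h) k)%R) 0)
                (hmor g h)).
- move=> g h /(shift (fun k => rho (Phi g k - Phi h k)%R)); exact: hinj.
Qed.

(* The amplified approximation: index j codes the pair (k, t) and carries
   T^t(Phi_k). *)
Definition ampl_dims (n : nat -> nat) : nat -> nat :=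
  fun j => ampl_dim (of_nat j).2 (n (of_nat j).1).

Definition ampl_seq (n : nat -> nat) (a : mxseq n) : mxseq (ampl_dims n) :=
  fun j => amplify_iter (a (of_nat j).1) (of_nat j).2.

(* If j = <k, t> is large then k or t is large, and the dimension is at
   least max(n_k, 2^t). *)
Lemma ampl_dims_diverges (n : nat -> nat) :
  (forall k, (0 < n k)%N) -> diverges n -> diverges (ampl_dims n).
Proof.
move=> npos dn N; have [K1 hK1] := dn N.
pose M := maxn K1 N.
exists (M + 2 * M * M + 1)%N => j hj; rewrite /ampl_dims.
case e : (of_nat j) => [k t] /=.
have hs := to_nat_spec k t; rewrite -e cancel_to_of in hs.
have [dim_n dim_2t] := ampl_dim_ge t (npos k).
have [hk|ht] : (M <= k)%N \/ (M <= t)%N.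
  by case: (leqP M k) => hk; [left | case: (leqP M t) => ht; [right | nia]].
- by apply: leq_trans dim_n; apply: hK1; rewrite (leq_trans _ hk) ?leq_maxl.
- apply: leq_trans dim_2t; apply: leq_trans (ltnW (ltn_expl t (isT : (1 < 2)%N))).
  by rewrite (leq_trans _ ht) ?leq_maxr.
Qed.

(* For fixed t, the morphism defect of T^t Phi is at most (3/2)^t times that
   of Phi, hence vanishes along U; this holds for every t. *)
Lemma ampl_seq_morphism (U : ultrafilter) (n : nat -> nat) (Phi : G -> mxseq n) :
  ultraprod_morphism U Phi -> ultraprod_morphism (prodU U) (fun g => ampl_seq (Phi g)).
Proof.
move=> [hGL hmor]; split=> [g j|g h eps heps]; first exact/amplify_iter_unit/hGL.
pose defect (p : nat * nat) := mx_dist (amplify_iter (Phi (gmul g h) p.1) p.2)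
  (mulmx (amplify_iter (Phi g p.1) p.2) (amplify_iter (Phi h p.1) p.2)).
apply: (@prodU_mem U (fun p => Rabs (defect p - 0) < eps)).
apply: uf_upward (@uf_full U) => t _.
have hp : 0 < (3 / 2) ^ t by apply: pow_lt; lra.
have := hmor g h (eps / (3 / 2) ^ t) ltac:(apply: Rdiv_lt_0_compat; lra).
apply: uf_upward => k; rewrite /defect /= !Rminus_0_r -amplify_iterM.
rewrite !Rabs_right; try exact/Rle_ge/mx_dist_ge0.
move=> hlt; apply: Rle_lt_trans (mx_dist_amplify_iter_le _ _ t) _.
have -> : eps = (3 / 2) ^ t * (eps / (3 / 2) ^ t) by field; lra.
by apply: Rmult_lt_compat_l.
Qed.

(* Approximate morphisms send e close to 1: d(Phi e, 1) = d(Phi e, Phi e Phi e). *)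
Lemma morphism_unit_near_one (U : ultrafilter) (n : nat -> nat) (Phi : G -> mxseq n) :
  ultraprod_morphism U Phi -> is_ulim U (fun k => mx_dist (Phi (gone G) k) 1%:M) 0.
Proof.
move=> [hGL hmor] eps heps.
have := hmor (gone G) (gone G) eps heps; rewrite gmul1.
by apply: uf_upward => k; rewrite -mx_dist_sqr //; apply: hGL.
Qed.

Lemma injective_far_from_one (U : ultrafilter) (n : nat -> nat) (Phi : G -> mxseq n)
    (g : G) :
  ultraprod_morphism U Phi -> ultraprod_injective U Phi -> g <> gone G ->
  exists eps, 0 < eps /\ uf_mem U (fun k => eps <= mx_dist (Phi g k) 1%:M).
Proof.
move=> hmor hinj hg.
have [eps [heps far]] : exists eps, 0 < eps /\
    uf_mem U (fun k => eps <= mx_dist (Phi g k) (Phi (gone G) k)).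
  apply: not_ulim0_bounded_below => [k|]; first exact: mx_dist_ge0.
  by move=> /hinj.
exists (eps / 2); split; first lra.
have near : uf_mem U (fun k => Rabs (mx_dist (Phi (gone G) k) 1%:M - 0) < eps / 2).
  by apply: morphism_unit_near_one => //; lra.
apply: uf_upward (uf_inter far near) => k [hfar].
rewrite Rminus_0_r Rabs_right; last exact/Rle_ge/mx_dist_ge0.
move=> hnear; have := mx_dist_triangle (Phi g k) 1%:M (Phi (gone G) k).
rewrite (mx_dist_sym 1%:M); lra.
Qed.

(* A non-trivial g is sent by the amplified approximation at distance >= 1/4
   from 1: for t large, T^t multiplies eps by (9/8)^t >= 1/(4 eps). *)
Lemma ampl_seq_separates (U : ultrafilter) (n : nat -> nat) (Phi : G -> mxseq n)
    (g : G) :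
  nonprincipal U -> ultraprod_morphism U Phi -> ultraprod_injective U Phi ->
  g <> gone G ->
  exists L : R, d_omega_is (prodU U) (ampl_seq (Phi g)) (mxseq_one (ampl_dims n)) L
    /\ 1 / 4 <= L.
Proof.
move=> np hmor hinj hg.
have [eps [heps far]] := injective_far_from_one hmor hinj hg.
have [t0 ht0] := pow_9_8_large heps.
have [L [hL hLge]] := ulim_exists (prodU U)
  (fun j => conj (mx_dist_ge0 (ampl_seq (Phi g) j) 1%:M) (mx_dist_le1 _ _)).
exists L; split; first exact: hL.
apply: hLge.
apply: (@prodU_mem U (fun p => 1 / 4 <= mx_dist (amplify_iter (Phi g p.1) p.2) 1%:M)).
apply: uf_upward (uf_cofinite np t0) => t ht.
apply: uf_upward far => k hk /=.
apply: Rle_trans (mx_dist_amplify_iter_one_ge t (proj1 hmor g k)).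
have := ht0 t ht; have : 0 < (9 / 8) ^ t by apply: pow_lt; lra.
by rewrite /Rmin; destruct Rle_dec; nra.
Qed.

End SoficApproximations.

Local Open Scope R_scope.

Theorem mainTheorem7 (G : countable_group) :
  linear_sofic G ->
  exists (U' : ultrafilter) (m : nat -> nat) (Psi : G -> mxseq m),
    [/\ nonprincipal U', diverges m, ultraprod_morphism U' Psi
      & forall g : G, g <> gone G ->
          exists L : R, d_omega_is U' (Psi g) (mxseq_one m) L /\ 1 / 4 <= L].
Proof.
move=> /linear_sofic_pos_dims [U [n [Phi [np npos dn hmor hinj]]]].
exists (prodU U), (ampl_dims n), (fun g => ampl_seq (Phi g)); split.
- exact: prodU_nonprincipal.
- exact: ampl_dims_diverges.
- exact: ampl_seq_morphism.
- by move=> g; apply: ampl_seq_separates.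
Qed.
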